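(* Let $W$ be a finite group and $V$ a finite-dimensional irreducible linear representation of $W$ over $\mathbb{R}$ or $\mathbb{C}$. Suppose there exist $v\in V\setminus\{0\}$ and $v'\in Wv$ such that $Wv\setminus\{v,v'\}$ does not span $V$. Then $|Wv|\le 2\dim(V)$.
   Context: $Wv$ denotes the orbit of $v$ under $W$. *)

From HB Require Import structures.
From mathcomp Require Import all_boot all_algebra all_fingroup.
From mathcomp Require Import mxrepresentation.
From Stdlib Require Import Reals.
From mathcomp Require Import Rstruct complex.
Set Implicit Arguments. Unset Strict Implicit. Unset Printing Implicit Defensive.
Import GRing.Theory.
Local Open Scope ring_scope.

Section Defs.
Variables (F : fieldType) (gT : finGroupType) (G : {group gT}) (n : nat).

Definition rorbit (rG : mx_representation F G n) (v : 'rV[F]_n) : seq 'rV[F]_n :=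
  undup [seq v *m rG g | g <- enum G].

Definition spans_all (s : seq 'rV[F]_n) : bool :=
  row_full (\matrix_(i < size s) nth 0 s i).
End Defs.

From HB Require Import structures.
From mathcomp Require Import all_boot all_algebra all_fingroup.
From mathcomp Require Import mxrepresentation.
From Stdlib Require Import Reals.
From mathcomp Require Import Rstruct complex.
Import GRing.Theory.
Local Open Scope ring_scope.
Set Implicit Arguments. Unset Strict Implicit. Unset Printing Implicit Defensive.

(* If the orbit minus {v, v'} does not span V, some nonzero linear form c
   vanishes on all of it.  By irreducibility the translates x |-> c(x g),
   g in W, span the dual space, so n of them, for g_1, ..., g_n, form a basis.
   Every orbit point w is nonzero, hence c(w g_k) <> 0 for some k; then the
   orbit point w g_k must be v or v', i.e. w lies in the 2n-element set
   {v g_k^-1, v' g_k^-1 | k <= n}. *)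

Section LinearAlgebra.
Variable F : fieldType.

Lemma nz_col m n (A : 'M[F]_(m, n)) : A != 0 -> exists j, col j A != 0.
Proof.
move=> nzA; apply/existsP; apply: contraNT nzA => /existsPn col0.
apply/eqP/matrixP => i j.
by move/negPn/eqP/matrixP/(_ i 0): (col0 j); rewrite !mxE.
Qed.

Lemma not_row_full_annihilator m n (M : 'M[F]_(m, n)) :
  ~~ row_full M -> exists2 c : 'cV_n, c != 0 & M *m c = 0.
Proof.
move=> notfull; exists (nz_row (kermx M^T))^T.
  by rewrite trmx_eq0 nz_row_eq0 kermx_eq0 /row_free mxrank_tr.
apply: trmx_inj; rewrite trmx_mul trmxK trmx0; apply/eqP.
by rewrite -sub_kermx nz_row_sub.
Qed.

Lemma not_spans_all_annihilator n (s : seq 'rV[F]_n) :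
  ~~ spans_all s -> exists2 c : 'cV_n, c != 0 & {in s, forall w, w *m c = 0}.
Proof.
case/not_row_full_annihilator=> c nz_c Mc0; exists c => // w s_w.
have lt_ws : (index w s < size s)%nat by rewrite index_mem.
have -> : w = row (Ordinal lt_ws) (\matrix_(i < size s) nth 0 s i).
  by rewrite rowK nth_index.
by rewrite -row_mul Mc0 row0.
Qed.

Lemma col_mul m n p (A : 'M[F]_(m, n)) (B : 'M[F]_(n, p)) j :
  col j (A *m B) = A *m col j B.
Proof. by rewrite !colE mulmxA. Qed.

(* The rows of B indexed by f form a basis, so no nonzero w is orthogonal to
   all of them. *)
Lemma row_full_separates m n (B : 'M[F]_(m, n)) : row_full B ->
  exists f : 'I_n -> 'I_m,
    forall w : 'rV_n, w != 0 -> exists k, w *m (row (f k) B)^T != 0.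
Proof.
move=> fullB; pose f := fullrankfun fullB; exists f => w nz_w.
have unitC : (rowsub f B)^T \in unitmx by rewrite unitmx_tr fullrowsub_unit.
have [k nz_k] : exists k, col k (w *m (rowsub f B)^T) != 0.
  apply: nz_col; apply: contraNneq nz_w => w0.
  by rewrite -(mulmxK unitC w) w0 mul0mx.
by exists k; rewrite -row_rowsub tr_row -col_mul.
Qed.

End LinearAlgebra.

Section OrbitBound.
Variables (F : fieldType) (gT : finGroupType) (W : {group gT}) (n : nat).
Variable rG : mx_representation F W n.

Lemma rorbitP v w :
  reflect (exists2 g, g \in W & w = v *m rG g) (w \in rorbit rG v).
Proof.
rewrite mem_undup; apply: (iffP mapP) => [[g] | [g Wg ->]].
  by rewrite mem_enum; exists g.
by exists g; rewrite ?mem_enum.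
Qed.

Variable c : 'cV[F]_n.

Definition translate_forms : 'M[F]_(#|W|, n) :=
  \matrix_(j < #|W|) (rG (enum_val j) *m c)^T.

Lemma mul_row_translate_forms p (Y : 'M_(p, n)) j :
  Y *m (row j translate_forms)^T = Y *m rG (enum_val j) *m c.
Proof. by rewrite rowK trmxK mulmxA. Qed.

Lemma col_mul_translate_forms p (Y : 'M_(p, n)) j :
  col j (Y *m translate_forms^T) = Y *m rG (enum_val j) *m c.
Proof. by rewrite col_mul -tr_row mul_row_translate_forms. Qed.

Lemma kermx_translate_formsP p (Y : 'M_(p, n)) :
  reflect (forall g, g \in W -> Y *m rG g *m c = 0)
          (Y <= kermx translate_forms^T)%MS.
Proof.
rewrite sub_kermx; apply: (iffP eqP) => [Y0 g Wg | Y0].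
  have := congr1 (col (enum_rank_in Wg g)) Y0.
  by rewrite col_mul_translate_forms enum_rankK_in // col0.
apply/matrixP => a j; move: (Y0 _ (enum_valP j)).
by rewrite -col_mul_translate_forms => /matrixP/(_ a 0); rewrite !mxE.
Qed.

Hypotheses (irrG : mx_irreducible rG) (nz_c : c != 0).

(* The common kernel of the translates is a submodule not containing all of
   V, since c itself is nonzero. *)
Lemma translate_forms_full : row_full translate_forms.
Proof.
case/mx_irrP: irrG => _ irrU.
set K := kermx translate_forms^T.
have modK : mxmodule rG K.
  apply/mxmoduleP => x Wx; apply/kermx_translate_formsP => g Wg.
  rewrite -(mulmxA K) -repr_mxM //.
  exact: kermx_translate_formsP (submx_refl K) _ (groupM Wx Wg).
have K0 : K == 0.
  apply: contraR nz_c => nzK.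
  have /kermx_translate_formsP/(_ 1%g (group1 W)) : (1%:M <= K)%MS.
    by rewrite sub1mx irrU.
  by rewrite repr_mx1 !mul1mx => ->.
by move: K0; rewrite kermx_eq0 /row_free mxrank_tr.
Qed.

Lemma translates_separate :
  exists g : 'I_n -> gT, (forall k, g k \in W) /\
    forall w : 'rV_n, w != 0 -> exists k, w *m rG (g k) *m c != 0.
Proof.
have [f sepf] := row_full_separates translate_forms_full.
exists (fun k => enum_val (f k)); split=> [k | w /sepf[k]]; first exact: enum_valP.
by exists k; rewrite -mul_row_translate_forms.
Qed.

Lemma rorbit_size_le v v' : v != 0 ->
  {in rorbit rG v, forall w, w \notin [:: v; v'] -> w *m c = 0} ->
  (size (rorbit rG v) <= 2 * n)%nat.
Proof.
move=> nz_v c0.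
have [g [Wg sep_g]] := translates_separate.
pose S := [seq v *m rG (g k)^-1%g | k <- enum 'I_n] ++
          [seq v' *m rG (g k)^-1%g | k <- enum 'I_n].
have -> : (2 * n)%nat = size S.
  by rewrite size_cat !size_map -enumT size_enum_ord mul2n addnn.
apply: uniq_leq_size; first exact: undup_uniq.
move=> _ /rorbitP[h Wh ->].
have nz_vh : v *m rG h != 0.
  by apply: contraNneq nz_v => vh0; rewrite -(repr_mxK rG Wh v) vh0 mul0mx.
have [k nz_k] := sep_g _ nz_vh.
have orb_k : v *m rG h *m rG (g k) \in rorbit rG v.
  by apply/rorbitP; exists (h * g k)%g; rewrite ?groupM // repr_mxM // mulmxA.
have hit : v *m rG h *m rG (g k) \in [:: v; v'].
  by apply: contraNT nz_k => notin; rewrite c0.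
rewrite mem_cat -(repr_mxK rG (Wg k) (v *m rG h)).
move: hit; rewrite !inE => /orP[] /eqP ->.
  by apply/orP; left; apply: map_f; rewrite mem_enum.
by apply/orP; right; apply: map_f; rewrite mem_enum.
Qed.

End OrbitBound.

Lemma rorbit_size_le_of_not_spans (F : fieldType) (gT : finGroupType)
    (W : {group gT}) (n : nat) (rG : mx_representation F W n) :
  mx_irreducible rG -> forall v v' : 'rV[F]_n, v != 0 ->
  ~~ spans_all [seq w <- rorbit rG v | w \notin [:: v; v']] ->
  (size (rorbit rG v) <= 2 * n)%nat.
Proof.
move=> irrG v v' nz_v /not_spans_all_annihilator[c nz_c c0].
apply: (rorbit_size_le irrG nz_c nz_v (v' := v')) => w orb_w notin.
by apply: c0; rewrite mem_filter notin orb_w.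
Qed.

Theorem lemma4p4 :
  (forall (gT : finGroupType) (W : {group gT}) (n : nat)
          (rG : mx_representation R W n),
     mx_irreducible rG ->
     (forall v : 'rV[R]_n, v != 0 ->
        forall v' : 'rV[R]_n, v' \in rorbit rG v ->
          ~~ spans_all [seq w <- rorbit rG v | w \notin [:: v; v']] ->
          leq (size (rorbit rG v)) (muln 2 n)))
  /\
  (forall (gT : finGroupType) (W : {group gT}) (n : nat)
          (rG : mx_representation R[i] W n),
     mx_irreducible rG ->
     (forall v : 'rV[R[i]]_n, v != 0 ->
        forall v' : 'rV[R[i]]_n, v' \in rorbit rG v ->
          ~~ spans_all [seq w <- rorbit rG v | w \notin [:: v; v']] ->
          leq (size (rorbit rG v)) (muln 2 n))).
Proof.
by split=> gT W n rG irrG v nz_v v' _; apply: rorbit_size_le_of_not_spans.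
Qed.
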